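(* Let $1\leq p <\infty$ and $f\in L^{p}(\mu)$. Then the set $\mathcal{O}_{f}:=\left\{\mathfrak{a}\in I : \int_{\mathcal{C}_{\mathfrak{a}}}|f|^{p} \ d\mu\neq 0 \right\}$ is countable and $$\sum_{\mathfrak{a}\in\mathcal{O}_{f}}\int_{\mathcal{C}_{\mathfrak{a}}}|f|^{p} \ d\mu =\int_{\mathcal{F}_{f}}|f|^{p} \ d\mu \leq \int_{\mathbb{R}^{\mathbb{N}}} |f|^{p} \ d\mu,$$ where $\mathcal{F}_{f}:= \bigsqcup_{\mathfrak{a}\in \mathcal{O}_{f}}\mathcal{C}_{\mathfrak{a}}$.
   Context: Let $\mathcal{B}$ be the Borel $\sigma$-algebra of $\mathbb{R}$, $\lambda$ the Lebesgue measure, and $\mathcal{B}_{\infty}$ the $\sigma$-algebra on $\mathbb{R}^{\mathbb{N}}$ generated by the cylinder sets $\prod_{i=1}^{m}C_{i}\times\prod_{i=m+1}^{\infty}\mathbb{R}$ with $C_i\in\mathcal{B}$, $m\in\mathbb{N}$. Let $\mathcal{F}(\mathcal{B},\lambda)$ be the set of finite rectangles $\prod_{i\in\mathbb{N}}C_{i}$ with $C_i\in\mathcal{B}$ and $\prod_{i}\lambda(C_i)\in[0,\infty)$, with $\mathrm{vol}(\prod_{i}C_i):=\prod_i\lambda(C_i)$. The measure $\mu$ is the restriction to $\mathcal{B}_{\infty}$ of the outer measure $\mu^{\ast}(A):=\inf\{\sum_{n}\mathrm{vol}(\mathscr{C}_{n}) : \mathscr{C}_{n}\in\mathcal{F}(\mathcal{B},\lambda),\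 A\subset\bigcup_{n}\mathscr{C}_{n}\}$ ($\inf\varnothing=\infty$). Let $I:=\mathbb{Z}^{\mathbb{N}}$ and, for $\mathfrak{a}=(a_n)_{n\in\mathbb{N}}\in I$, let $\mathcal{C}_{\mathfrak{a}}:=\prod_{n\in\mathbb{N}}[a_{n},a_{n}+1)$ (these unit cubes are pairwise disjoint, cover $\mathbb{R}^{\mathbb{N}}$, and have $\mu$-measure $1$). *)

From HB Require Import structures.
From mathcomp Require Import all_boot all_order all_algebra.
From mathcomp Require Import all_classical all_reals all_analysis.
Unset Printing Implicit Defensive.
Import Order.TTheory GRing.Theory Num.Theory numFieldNormedType.Exports.
Local Open Scope classical_set_scope.
Local Open Scope ring_scope.

Notation RN R := (nat -> R).

Definition cylinders (R : realType) : set (set (RN R)) :=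
  [set A | exists (m : nat) (C : nat -> set R),
     (forall i, measurable (C i)) /\
     A = [set x : RN R | forall i, (i < m)%N -> C i (x i)]].

Notation RNinf R := (g_sigma_algebraType (cylinders R)).

Definition rect (R : realType) (C : nat -> set R) : set (RN R) :=
  [set x | forall i, C i (x i)].

(* [finrect C v] : prod_i C_i is a finite rectangle (each C_i Borel, the
   infinite product prod_i lambda(C_i), i.e. the limit of the partial
   products, exists and lies in [0, oo)), and its volume is v. *)
Definition finrect (R : realType) (C : nat -> set R) (v : R) : Prop :=
  (forall i, measurable (C i)) /\
  ((fun n => (\prod_(i < n) (@lebesgue_measure R (C i)))%E) @ \oo --> v%:E).

Definition mu_star (R : realType) (A : set (RN R)) : \bar R :=
  ereal_inf [set s | exists (C : nat -> nat -> set R) (v : nat -> R),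
     (forall n, finrect R (C n) (v n)) /\
     A `<=` \bigcup_n rect R (C n) /\
     s = (\sum_(0 <= n <oo) (v n)%:E)%E].

Definition cube (R : realType) (a : nat -> int) : set (RN R) :=
  [set x | forall n, (a n)%:~R <= x n < (a n)%:~R + 1].

From HB Require Import structures.
From mathcomp Require Import all_boot all_order all_algebra.
From mathcomp Require Import all_classical all_reals all_analysis.
From mathcomp Require Import finmap measurable_realfun.
Import Order.TTheory GRing.Theory Num.Theory numFieldNormedType.Exports.
Local Open Scope classical_set_scope.
Local Open Scope ring_scope.

(* The integrals of |f|^p over the pairwise disjoint cubes have finite sums
   bounded by the integral over R^N, so their sum over all of Z^N is finite.
   A nonnegative family with finite sum has countable support, since for each
   k only finitely many terms exceed 1/(k+1).  Enumerating the countable set O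
   by natural numbers turns its sum into a series, which equals the integral
   over the union of the cubes by countable additivity. *)

Lemma floor_cube {R : realType} {a : nat -> int} {x : RN R} :
  cube R a x -> forall n, Num.floor (x n) = a n.
Proof. by move=> xa n; apply: floor_def; rewrite intrD xa. Qed.

Lemma trivIset_cube (R : realType) : trivIset setT (cube R).
Proof.
move=> a b _ _ [x [ax bx]]; apply/funext => n.
by rewrite -(floor_cube ax) -(floor_cube bx).
Qed.

Lemma measurable_cube (R : realType) (a : nat -> int) :
  measurable (cube R a : set (RNinf R)).
Proof.
pose J i := `[(a i)%:~R, (a i)%:~R + 1[%classic : set R.
have -> : (cube R a : set (RNinf R)) =
    \bigcap_m [set x : RNinf R | forall i, (i < m)%N -> J i (x i)].
  apply/seteqP; split => x /= xa.
    by move=> m _ i _; rewrite /J /= in_itv /= xa.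
  by move=> n; have := xa n.+1 I n (ltnSn n); rewrite /J /= in_itv.
apply: bigcapT_measurable => m; apply: sub_sigma_algebra.
by exists m, J; split => // i; exact: measurable_itv.
Qed.

Section countable_support.
Local Open Scope ereal_scope.
Context {R : realType} {I : choiceType} {c : I -> \bar R}.
Hypothesis c_ge0 : forall i, 0 <= c i.
Hypothesis c_fin : \esum_(i in [set: I]) c i < +oo.

Lemma esum_fin_finite_gt (e : R) :
  (0 < e)%R -> finite_set [set i | e%:E < c i].
Proof.
move=> e0; have [r cr] : exists r, \esum_(i in [set: I]) c i = r%:E.
  exists (fine (\esum_(i in [set: I]) c i)).
  by rewrite fineK // ge0_fin_numE // esum_ge0.
have r0 : (0 <= r)%R by rewrite -lee_fin -cr esum_ge0.
apply: contrapT => /(infinite_set_fset (Num.Def.archi_bound (r / e))).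
case=> B Be nB; pose s := enum_fset B.
(* [size s] terms above [e] sum to more than [r] once [size s > r / e]. *)
have : ((size s)%:R * e)%:E <= r%:E.
  rewrite -cr; apply: esum_ge; exists [set` B]; first by split.
  rewrite fsbig_finite //= set_fsetK.
  rewrite -[leLHS](_ : \sum_(i <- s) e%:E = _); last first.
    by rewrite sumEFin big_const_seq count_predT iter_addr_0 mulr_natl.
  by rewrite big_seq [leRHS]big_seq; apply: lee_sum => i /Be/ltW.
rewrite lee_fin leNgt => /negP; apply.
rewrite -ltr_pdivrMr //; apply: lt_le_trans (archi_boundP _) _.
  by rewrite divr_ge0 // ltW.
by rewrite ler_nat.
Qed.

Lemma esum_fin_countable_neq0 : countable [set i | c i != 0].
Proof.
have supp_sub : [set i | c i != 0] `<=`
    \bigcup_k [set i | (k.+1%:R^-1)%:E < c i].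
  move=> i ci0; have : 0 < c i by rewrite lt0e ci0 c_ge0.
  case ciE : (c i) => [y| |//]; last by exists 0%N => //=; rewrite ciE ltry.
  rewrite lte_fin => y0.
  have [k _ /(_ k (leqnn k)) ky] := near_infty_natSinv_lt (PosNum y0).
  by exists k => //=; rewrite ciE lte_fin.
apply: sub_countable (subset_card_le supp_sub) _.
apply: bigcup_countable => [|k _]; first exact: countableP.
by apply/finite_set_countable/esum_fin_finite_gt; rewrite invr_gt0.
Qed.

End countable_support.

Section integral_over_disjoint_family.
Local Open Scope ereal_scope.
Context {d} {T : measurableType d} {R : realType}.
Variable mu : {measure set T -> \bar R}.
Context {I : choiceType} {D : I -> set T}.
Hypotheses (mD : forall i, measurable (D i)) (tD : trivIset setT D).
Context {g : T -> \bar R}.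
Hypotheses (mg : measurable_fun [set: T] g) (g_ge0 : forall x, 0 <= g x).

Lemma esum_integral_le (O : set I) :
  \esum_(i in O) \int[mu]_(x in D i) g x <= \int[mu]_x g x.
Proof.
apply: ge_ereal_sup => _ [X [finX _] <-].
rewrite fsbig_finite //= -ge0_integral_bigsetU //.
- by apply: ge0_subset_integral => //; exact: bigsetU_measurable.
- exact: sub_trivIset tD.
- exact: measurable_funS mg.
Qed.

Lemma ge0_integral_countable_bigcup (O : set I) : countable O ->
  \int[mu]_(x in \bigcup_(i in O) D i) g x =
  \esum_(i in O) \int[mu]_(x in D i) g x.
Proof.
move=> /countable_injP[h hinj].
have [->|/set0P[i0 _]] := eqVneq O set0.
  by rewrite esum_set0 bigcup_set0 integral_set0.
pose e := pinv_ (fun=> i0) O h; pose B := h @` O.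
have [_ einj _] := injpinv_bij (fun=> i0) hinj.
have <- : e @` B = O := injpinv_image (fun=> i0) hinj.
pose F k := if k \in B then D (e k) else set0.
have mF k : measurable (F k) by rewrite /F; case: ifPn.
have tF : trivIset setT F.
  apply: (trivIset_mkcond B (D \o e)).1; rewrite (trivIset_comp _ einj).
  exact: sub_trivIset tD.
rewrite bigcup_image bigcup_mkcond -/F ge0_integral_bigcup //; last first.
  exact: measurable_funS mg.
rewrite esum_set_image //; last by move=> k _; exact: integral_ge0.
rewrite [RHS]eseries_mkcond; apply: eq_eseriesr => k _.
by rewrite /F; case: ifPn => // _; rewrite integral_set0.
Qed.

End integral_over_disjoint_family.

Theorem theorem3p1 (R : realType)
  (mu : {measure set (RNinf R) -> \bar R})
  (hmu : forall A : set (RNinf R), measurable A -> mu A = mu_star R A)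
  (p : R) (hp : 1 <= p)
  (f : RNinf R -> R)
  (hf : measurable_fun setT f)
  (hfp : (\int[mu]_x (`|f x| `^ p)%:E < +oo)%E) :
  let O := [set a : nat -> int |
              (\int[mu]_(x in cube R a) (`|f x| `^ p)%:E != 0)%E] in
  let F := \bigcup_(a in O) (cube R a : set (RNinf R)) in
  countable O /\
  (\esum_(a in O) \int[mu]_(x in cube R a) (`|f x| `^ p)%:E
     = \int[mu]_(x in F) (`|f x| `^ p)%:E)%E /\
  (\int[mu]_(x in F) (`|f x| `^ p)%:E <= \int[mu]_x (`|f x| `^ p)%:E)%E.
Proof.
move=> O F.
have mfp : measurable_fun [set: RNinf R] (fun x => (`|f x| `^ p)%:E).
  apply/measurable_EFinP/(measurableT_comp (measurable_powR _)).
  exact: measurableT_comp.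
have fp_ge0 x : (0 <= (`|f x| `^ p)%:E)%E by rewrite lee_fin powR_ge0.
have cube_int_ge0 a : (0 <= \int[mu]_(x in cube R a) (`|f x| `^ p)%:E)%E.
  exact: integral_ge0.
have esum_le :=
  esum_integral_le mu (measurable_cube R) (trivIset_cube R) mfp fp_ge0.
have cO : countable O.
  exact: esum_fin_countable_neq0 cube_int_ge0 (le_lt_trans (esum_le _) hfp).
have intE := ge0_integral_countable_bigcup mu
  (measurable_cube R) (trivIset_cube R) mfp fp_ge0 _ cO.
by split=> //; split; rewrite intE.
Qed.
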